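(* For every integer $k\geq 1$ there exist $n$ and a covering $k$-colouring of the edges of $K_n^{(3)}$ with no tricoloured $4$-set.
   Context: $K_n^{(3)}$ is the complete $3$-uniform hypergraph on $n$ vertices (edges are all $3$-subsets). A $3$-uniform hypergraph on vertex set $V$ is a covering if every $2$-subset of $V$ is contained in some edge. A $k$-colouring of the edges of $K_n^{(3)}$ is covering if for each colour, the $3$-graph on all $n$ vertices formed by the edges of that colour is a covering. A $4$-set of vertices is tricoloured if its four $3$-subsets receive exactly three distinct colours. *)

From mathcomp Require Import all_boot.
Set Implicit Arguments. Unset Strict Implicit. Unset Printing Implicit Defensive.

(* An edge-colouring of K_n^(3) with k colours: a map from subsets of 'I_n to
   colours 'I_k; only its values on 3-subsets (the edges) are relevant. *)
Definition colouring (n k : nat) := {set 'I_n} -> 'I_k.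

Definition covering_colouring (n k : nat) (c : colouring n k) : Prop :=
  forall (i : 'I_k) (x y : 'I_n), x != y ->
    exists z : 'I_n, #|[set x; y; z]| = 3 /\ c [set x; y; z] = i.

Definition tricoloured (n k : nat) (c : colouring n k) (S : {set 'I_n}) : Prop :=
  #|S| = 4 /\ #|[set c T | T in [set T in powerset S | #|T| == 3]]| = 3.

From mathcomp Require Import all_boot zify.
Set Implicit Arguments. Unset Strict Implicit. Unset Printing Implicit Defensive.

(* Write v(x, y) for the 2-adic valuation of |x - y|.  In every triangle two of
   the three values of v are equal and the third is larger, so a triangle has
   two distinct levels p < r, and we colour it by v(p, r) mod k.  Among four
   points let ab have the largest level; then ac = bc and ad = bd, so the
   triangles acd and bcd get the same colour, abc gets v(ac, ab) and abd gets
   v(ad, ab), and the isosceles property of v on the levels themselves leaves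
   at most two colours.  For covering, given x, y at level t and a colour i,
   choose a level s with |s - t| = 2^i and a point z with |z - x| = 2^s: the
   triangle xyz has levels t and s, hence colour i.  The vertex set
   [0, 2^(2^k)) leaves room for both choices. *)

Definition isosceles (p q r : nat) : Prop :=
  (p = q /\ p < r) \/ (p = r /\ p < q) \/ (q = r /\ q < p).

Lemma isosceles_sym p q r : isosceles p q r -> isosceles q p r.
Proof. rewrite /isosceles; lia. Qed.

Lemma isosceles_max p q r : isosceles p q r -> p <= r -> q <= r -> p = q /\ p < r.
Proof. rewrite /isosceles; lia. Qed.

Definition two_valued (T : eqType) (s : seq T) := exists u v, {subset s <= [:: u; v]}.

Lemma two_valued_sub (T : eqType) (s s' : seq T) :
  {subset s <= s'} -> two_valued s' -> two_valued s.
Proof. by move=> ss' [u [v s'uv]]; exists u, v => t /ss' /s'uv. Qed.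

Lemma isosceles_two_valued p q r : isosceles p q r -> two_valued [:: p; q; r].
Proof.
by case=> [[-> _]|[[-> _]|[-> _]]]; [exists q, r | exists r, q | exists p, r];
  move=> t; rewrite !inE => /or3P[]/eqP->; rewrite eqxx ?orbT.
Qed.

Lemma logn2_gt0 m : (0 < logn 2 m) = (0 < m) && ~~ odd m.
Proof. by rewrite logn_gt0 mem_primes dvdn2. Qed.

Lemma logn2_mulX m e : 0 < m -> logn 2 (m * 2 ^ e) = logn 2 m + e.
Proof. by move=> m_gt0; rewrite lognM ?expn_gt0 // pfactorK. Qed.

Lemma isosceles_logn2_odd_sum a b A B : odd a -> odd b ->
  isosceles A B (logn 2 (a * 2 ^ A + b * 2 ^ B)).
Proof.
wlog le_AB : a b A B / A <= B.
  move=> IH oa ob; case: (leqP A B) => [le_AB | /ltnW le_BA]; first exact: IH.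
  by apply: isosceles_sym; rewrite addnC; apply: IH.
move=> oa ob.
have -> : a * 2 ^ A + b * 2 ^ B = (a + b * 2 ^ (B - A)) * 2 ^ A.
  by rewrite mulnDl -mulnA -expnD subnK.
have sum_gt0 : 0 < a + b * 2 ^ (B - A) by case: a oa.
rewrite logn2_mulX //; case: (posnP (B - A)) => [BA | BA].
- have : 0 < logn 2 (a + b * 2 ^ (B - A)).
    by rewrite logn2_gt0 sum_gt0 BA muln1 oddD oa ob.
  rewrite /isosceles; lia.
- have -> : logn 2 (a + b * 2 ^ (B - A)) = 0.
    apply/eqP; rewrite eqn0Ngt logn2_gt0 negb_and oddD oddM oddX oa.
    by rewrite negbK ob (gtn_eqF BA) orbT.
  rewrite /isosceles; lia.
Qed.

Lemma isosceles_logn2_add a b : 0 < a -> 0 < b ->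
  isosceles (logn 2 a) (logn 2 b) (logn 2 (a + b)).
Proof.
move=> a_gt0 b_gt0.
have [a' oa {2}->] := pfactor_coprime (isT : prime 2) a_gt0.
have [b' ob {2}->] := pfactor_coprime (isT : prime 2) b_gt0.
by apply: isosceles_logn2_odd_sum; rewrite -coprime2n.
Qed.

Definition v2dist (x y : nat) := logn 2 (x - y + (y - x)).

Lemma v2distC x y : v2dist x y = v2dist y x.
Proof. by rewrite /v2dist addnC. Qed.

Lemma v2dist_pow x y i : x - y + (y - x) = 2 ^ i -> v2dist x y = i.
Proof. by rewrite /v2dist => ->; rewrite pfactorK. Qed.

Lemma v2dist_lt m x y : x < 2 ^ m -> y < 2 ^ m -> x != y -> v2dist x y < m.
Proof.
move=> x_lt y_lt /eqP xy; rewrite -(ltn_exp2l _ _ (isT : 1 < 2)).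
have d_gt0 : 0 < x - y + (y - x) by lia.
apply: leq_ltn_trans (dvdn_leq d_gt0 (pfactor_dvdnn 2 _)) _; lia.
Qed.

Lemma isosceles_v2dist_lt x y z : x < y < z ->
  isosceles (v2dist x y) (v2dist y z) (v2dist x z).
Proof.
move=> /andP[xy yz]; rewrite /v2dist.
have -> : x - z + (z - x) = (x - y + (y - x)) + (y - z + (z - y)) by lia.
apply: isosceles_logn2_add; lia.
Qed.

Lemma isosceles_v2dist x y z : x != y -> x != z -> y != z ->
  isosceles (v2dist x z) (v2dist y z) (v2dist x y).
Proof.
wlog lt_xy : x y / x < y.
  move=> IH xy xz yz; move: (xy); rewrite neq_ltn => /orP[lt | gt]; first exact: IH.
  by rewrite (v2distC x y); apply: isosceles_sym; apply: IH; rewrite // eq_sym.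
move=> _ /eqP xz /eqP yz.
have := v2distC x y; have := v2distC x z; have := v2distC y z.
have [zx | [xzy | yz']] : z < x \/ x < z < y \/ y < z by lia.
- have := @isosceles_v2dist_lt z x y; rewrite /isosceles; lia.
- have := @isosceles_v2dist_lt x z y; rewrite /isosceles; lia.
- have := @isosceles_v2dist_lt x y z; rewrite /isosceles; lia.
Qed.

Definition level_colour (p q r : nat) :=
  v2dist (minn p (minn q r)) (maxn p (maxn q r)).

Lemma level_colour_eq p r : level_colour p p r = v2dist p r.
Proof.
rewrite /level_colour.
case: (leqP p r) => [le | /ltnW le]; last rewrite v2distC; congr v2dist; lia.
Qed.

Lemma level_colour_isosceles p q r : isosceles p q r -> p != q ->
  level_colour p q r = v2dist p q.
Proof.
rewrite /level_colour /isosceles => iso /eqP pq.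
case: (leqP p q) => [le | /ltnW le]; last rewrite v2distC; congr v2dist; lia.
Qed.

Definition triple_colour (x y z : nat) :=
  level_colour (v2dist x z) (v2dist y z) (v2dist x y).

Lemma triple_colourC12 x y z : triple_colour x y z = triple_colour y x z.
Proof. by rewrite /triple_colour /level_colour (v2distC y x); congr v2dist; lia. Qed.

Lemma triple_colourC23 x y z : triple_colour x y z = triple_colour x z y.
Proof.
by rewrite /triple_colour /level_colour (v2distC z y); congr v2dist; lia.
Qed.

Lemma two_valued_four_levels p q r m : isosceles q r p -> p < m -> q < m ->
  two_valued [:: v2dist q m; v2dist p m; level_colour q r p].
Proof.
case=> [[<- qp] | [[-> rp] | [<- pq]]] pm qm.
- rewrite level_colour_eq; apply: isosceles_two_valued.
  by apply: isosceles_v2dist; rewrite neq_ltn ?qp ?pm ?(ltn_trans qp pm).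
- rewrite level_colour_isosceles; last by rewrite neq_ltn rp.
    by exists (v2dist p m), (v2dist p r) => t; rewrite !inE => /or3P[]->; rewrite ?orbT.
  by right; left.
- rewrite level_colour_isosceles ?(v2distC q r); last by rewrite neq_ltn pq orbT.
    apply: isosceles_two_valued; apply: isosceles_sym.
    by apply: isosceles_v2dist; rewrite neq_ltn ?pq ?pm ?qm ?(ltn_trans pq qm).
  by right; right.
Qed.

Lemma two_valued_four_points a b c d : uniq [:: a; b; c; d] ->
  v2dist a c <= v2dist a b -> v2dist b c <= v2dist a b ->
  v2dist a d <= v2dist a b -> v2dist b d <= v2dist a b ->
  two_valued [:: triple_colour b c d; triple_colour a c d;
                 triple_colour a b d; triple_colour a b c].
Proof.
rewrite /= !inE !negb_or !andbT => /and3P[/and3P[ab ac ad] /andP[bc bd] cd].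
move=> ac_ab bc_ab ad_ab bd_ab.
have [bcE ac_lt] := isosceles_max (isosceles_v2dist ab ac bc) ac_ab bc_ab.
have [bdE ad_lt] := isosceles_max (isosceles_v2dist ab ad bd) ad_ab bd_ab.
have := two_valued_four_levels (isosceles_v2dist ac ad cd) ac_lt ad_lt.
apply: two_valued_sub => t; rewrite /triple_colour -bcE -bdE !level_colour_eq !inE.
by case/or4P => ->; rewrite ?orbT.
Qed.

Lemma card_set3 (T : finType) (x y z : T) : x != y -> x != z -> y != z ->
  #|[set x; y; z]| = 3.
Proof.
by move=> xy xz yz; rewrite -setUA cardsU1 cards2 !inE yz negb_or xy xz.
Qed.

Lemma eq_set3 (T : finType) (A : {set T}) x y z : x != y -> x != z -> y != z ->
  A \subset [set x; y; z] -> #|A| = 3 -> A = [set x; y; z].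
Proof. by move=> xy xz yz sA cardA; apply/eqP; rewrite eqEcard sA card_set3 ?cardA. Qed.

Lemma three_subsets_of_four (T : finType) (a b c d : T) (A : {set T}) :
  uniq [:: a; b; c; d] -> A \subset [set a; b; c; d] -> #|A| = 3 ->
  [\/ A = [set b; c; d], A = [set a; c; d], A = [set a; b; d] | A = [set a; b; c]].
Proof.
rewrite /= !inE !negb_or !andbT => /and3P[/and3P[ab ac ad] /andP[bc bd] cd].
move=> sA cardA.
have subset_drop x (B : {set T}) :
    x \notin A -> [set a; b; c; d] :\ x \subset B -> A \subset B.
  by move=> xA; apply: subset_trans; rewrite subsetD1 sA.
have [aA | aA] := boolP (a \in A); last first.
  apply: Or41; apply: eq_set3 => //; apply: subset_drop aA _.
  by apply/subsetP=> t; rewrite !inE => /andP[/negPf->].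
have [bA | bA] := boolP (b \in A); last first.
  apply: Or42; apply: eq_set3 => //; apply: subset_drop bA _.
  by apply/subsetP=> t; rewrite !inE => /andP[/negPf->]; rewrite orbF.
have [cA | cA] := boolP (c \in A); last first.
  apply: Or43; apply: eq_set3 => //; apply: subset_drop cA _.
  by apply/subsetP=> t; rewrite !inE => /andP[/negPf->]; rewrite orbF.
apply: Or44; apply/esym/eqP; rewrite eqEcard cardA card_set3 // andbT.
by apply/subsetP=> t; rewrite !inE => /orP[/orP[]|] /eqP->.
Qed.

Lemma symmetric3_perm (T : eqType) (R : Type) (f : T -> T -> T -> R) p q r x y z :
  (forall x y z, f x y z = f y x z) -> (forall x y z, f x y z = f x z y) ->
  x != y -> x != z -> y != z ->
  x \in [:: p; q; r] -> y \in [:: p; q; r] -> z \in [:: p; q; r] ->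
  f x y z = f p q r.
Proof.
move=> f12 f23 + + + /[!inE] xP yP zP.
case/or3P: xP => /eqP->; case/or3P: yP => /eqP->; case/or3P: zP => /eqP->;
  rewrite ?eqxx // => _ _ _;
  by [| rewrite f12 | rewrite f23 | rewrite f12 f23 | rewrite f23 f12
       | rewrite f12 f23 f12].
Qed.

Lemma card4_max_pair (T : finType) (F : T -> T -> nat) (S : {set T}) :
  #|S| = 4 -> exists a b c d, [/\ S = [set a; b; c; d], uniq [:: a; b; c; d] &
    forall x y, x \in S -> y \in S -> x != y -> F x y <= F a b].
Proof.
move=> S4; have /card_gt1P[x0 [y0 [x0S y0S x0y0]]] : 1 < #|S| by rewrite S4.
pose P := [pred p : T * T | [&& p.1 \in S, p.2 \in S & p.1 != p.2]].
have P0 : P (x0, y0) by rewrite /= x0S y0S.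
case: (arg_maxnP (fun p : T * T => F p.1 p.2) P0) => -[a b] /and3P[/= aS bS ab] Fmax.
have bSa : b \in S :\ a by rewrite in_setD1 eq_sym ab.
have /cards2P[c [d [cd Ecd]]] : #|S :\ a :\ b| == 2.
  by move: S4; rewrite (cardsD1 a) aS (cardsD1 b (S :\ a)) bSa => S4; apply/eqP; lia.
have : [/\ c \in S :\ a :\ b & d \in S :\ a :\ b] by rewrite Ecd !inE !eqxx orbT.
rewrite !inE => -[/and3P[cb ca _] /and3P[db da _]].
exists a, b, c, d; split.
- rewrite -(setD1K aS) -(setD1K bSa) Ecd.
  by apply/setP=> t; rewrite !inE !orbA.
- by rewrite /= !inE !negb_or ab cd ![a == _]eq_sym ![b == _]eq_sym ca da cb db.
- by move=> x y xS yS xy; apply: (Fmax (x, y)); rewrite /= xS yS.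
Qed.

Section SetColour.

Variable n : nat.

Definition set_colour (A : {set 'I_n}) : nat :=
  if enum A is [:: x; y; z] then triple_colour x y z else 0.

Lemma set_colour_set3 (x y z : 'I_n) : x != y -> x != z -> y != z ->
  set_colour [set x; y; z] = triple_colour x y z.
Proof.
move=> xy xz yz; rewrite /set_colour.
have := card_set3 xy xz yz; rewrite cardE.
have : {subset [:: x; y; z] <= enum [set x; y; z]}.
  by move=> t; rewrite mem_enum !inE => /or3P[]/eqP->; rewrite eqxx ?orbT.
case: (enum _) => [|p [|q [|r []]]] // sub _.
symmetry; apply: (symmetric3_perm (f := fun a b c : 'I_n => triple_colour a b c)) => //.
- exact: triple_colourC12.
- exact: triple_colourC23.
all: by apply: sub; rewrite !inE eqxx ?orbT.
Qed.

Lemma set_colour_card4 (S : {set 'I_n}) : #|S| = 4 ->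
  exists u v, forall A : {set 'I_n},
    A \subset S -> #|A| = 3 -> set_colour A \in [:: u; v].
Proof.
move=> /(card4_max_pair (fun x y : 'I_n => v2dist x y)) [a [b [c [d [-> U max_ab]]]]].
have U' : uniq [:: val a; val b; val c; val d].
  by rewrite -[[:: _; _; _; _]]/(map val [:: a; b; c; d]) (map_inj_uniq val_inj).
move: (U); rewrite /= !inE !negb_or !andbT => /and3P[/and3P[ab ac ad] /andP[bc bd] cd].
have [u [v uv]] : two_valued [:: triple_colour b c d; triple_colour a c d;
                                triple_colour a b d; triple_colour a b c].
  by apply: two_valued_four_points; rewrite ?max_ab ?inE ?eqxx ?orbT.
exists u, v => A sA cardA.
by case: (three_subsets_of_four U sA cardA) => ->; rewrite set_colour_set3 //;
  apply: uv; rewrite !inE eqxx ?orbT.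
Qed.

Definition v2_colouring k (k_gt0 : 0 < k) : colouring n k :=
  fun A => Ordinal (ltn_pmod (set_colour A) k_gt0).

Lemma v2_colouring_not_tricoloured k (k_gt0 : 0 < k) (S : {set 'I_n}) :
  ~ tricoloured (v2_colouring k_gt0) S.
Proof.
case=> /set_colour_card4[u [v uv]]; apply/eqP; rewrite neq_ltn; apply/orP; left.
pose colour m := Ordinal (ltn_pmod m k_gt0).
apply: (@leq_ltn_trans #|[set colour u; colour v]|); last first.
  by rewrite cards2; case: (_ != _).
apply: subset_leq_card; apply/subsetP => c /imsetP[A].
rewrite !inE => /andP[sA /eqP cardA] {c}->.
by have := uv A sA cardA; rewrite /v2_colouring !inE => /orP[]/eqP->; rewrite eqxx ?orbT.
Qed.

End SetColour.

Lemma exists_at_distance N e t : t < N -> 2 * e <= N ->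
  exists2 s, s < N & s - t + (t - s) = e.
Proof.
move=> tN eN; case: (ltnP (t + e) N) => [teN | Nte]; first by exists (t + e); lia.
by exists (t - e); lia.
Qed.

Lemma v2_colouring_covering k (k_gt0 : 0 < k) :
  covering_colouring (@v2_colouring (2 ^ 2 ^ k) k k_gt0).
Proof.
move=> i x y xy.
have xy_lt : v2dist x y < 2 ^ k := v2dist_lt (ltn_ord x) (ltn_ord y) xy.
have [s s_lt st] : exists2 s, s < 2 ^ k & s - v2dist x y + (v2dist x y - s) = 2 ^ i.
  by apply: exists_at_distance; rewrite // -expnS leq_exp2l.
have [z' z_lt zx] : exists2 z, z < 2 ^ 2 ^ k & z - x + (x - z) = 2 ^ s.
  by apply: exists_at_distance; rewrite // -expnS leq_exp2l.
pose z := Ordinal z_lt.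
have xz_s : v2dist x z = s by rewrite v2distC; apply: v2dist_pow.
have s_ne : s != v2dist x y by apply/eqP=> E; have := expn_gt0 2 i; lia.
have xz : x != z by apply/eqP=> /(congr1 val) /= E; have := expn_gt0 2 s; lia.
have yz : y != z by apply: contraNneq s_ne => E; rewrite -xz_s -E.
exists z; split; first exact: card_set3.
apply: val_inj; rewrite /= set_colour_set3 // triple_colourC12 triple_colourC23.
have iso : isosceles (v2dist y x) (v2dist z x) (v2dist y z).
  by apply: isosceles_v2dist; rewrite // eq_sym.
rewrite /triple_colour (level_colour_isosceles iso); last first.
  by rewrite (v2distC z) xz_s (v2distC y) eq_sym.
by rewrite (v2distC y) (v2distC z) xz_s v2distC (v2dist_pow st) modn_small.
Qed.

Theorem lemma11 : forall k : nat, 1 <= k ->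
  exists (n : nat) (c : colouring n k),
    3 <= n /\ covering_colouring c /\ forall S : {set 'I_n}, ~ tricoloured c S.
Proof.
move=> k k_gt0; exists (2 ^ 2 ^ k), (v2_colouring k_gt0); split; [|split].
- by rewrite (@leq_trans (2 ^ 2)) // leq_exp2l // (@leq_trans (2 ^ 1)) // leq_exp2l.
- exact: v2_colouring_covering.
- exact: v2_colouring_not_tricoloured.
Qed.
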